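(* Let $\omega$ be the automorphism of $\mathcal A_\theta^{alg}$ with $U_1\mapsto U_2^{-1}$, $U_2\mapsto\lambda^{-1/2}U_1U_2^{-1}$, and let $H^0(\mathcal A_\theta^{alg},{}_{\omega}\mathcal A_\theta^{alg\ast})$ be the space of formal series $\varphi=\sum\varphi_{n,m}U_1^nU_2^m$ with $(\omega\cdot a)\varphi=\varphi a$ for all $a\in\mathcal A_\theta^{alg}$. Let $\mathbb Z_6$ be generated by the automorphism $-\omega$ with $U_1\mapsto U_2$, $U_2\mapsto\lambda^{-1/2}U_1^{-1}U_2$, acting termwise on this space. Then $H^0(\mathcal A_\theta^{alg},{}_{\omega}\mathcal A_\theta^{alg\ast})^{\mathbb Z_6}\cong\mathbb C^2$.
   Context: Let $\theta\in\mathbb R\setminus\mathbb Q$, $\lambda=e^{2\pi i\theta}$, $\lambda^s:=e^{2\pi i\theta s}$. $\mathcal A_\theta^{alg}$ is the complex algebra of finite sums $\sum a_{n,m}U_1^nU_2^m$ with $U_1,U_2$ invertible and $U_2U_1=\lambda U_1U_2$; formal series $\sum_{(n,m)\in\mathbb Z^2}\varphi_{n,m}U_1^nU_2^m$ with arbitrary coefficients form an $\mathcal A_\theta^{alg}$-bimodule via multiplication. Termwise action of an automorphism $h$: $h\cdot\sum\varphi_{n,m}U_1^nU_2^m=\sum\varphi_{n,m}\,h\cdot(U_1^nU_2^m)$. *)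

From HB Require Import structures.
From mathcomp Require Import all_boot all_order all_algebra.
From mathcomp Require Import all_classical all_reals all_analysis.
From mathcomp Require Import complex.
Set Implicit Arguments. Unset Strict Implicit. Unset Printing Implicit Defensive.
Import Order.TTheory GRing.Theory Num.Theory.
Local Open Scope ring_scope.
Local Open Scope classical_set_scope.

(* lambda^s := e^{2 pi i theta s} *)
Definition lam (R : realType) (theta s : R) : complex R :=
  Complex (cos (2 * pi * theta * s)) (sin (2 * pi * theta * s)).

(* index (n,m) of the monomial U1^n U2^m *)
Definition idx := (int * int)%type.

(* formal series  sum phi_{n,m} U1^n U2^m  with arbitrary coefficients;
   elements of A_theta^alg are the finitely supported ones *)
Definition fseries (R : realType) := idx -> complex R.

Definition finsupp (R : realType) (a : fseries R) : Prop :=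
  finite_set [set nm | a nm != 0].

(* a scalar multiple of a monomial:  (c, a, b) stands for  c U1^a U2^b *)
Definition mon (R : realType) := (complex R * int * int)%type.

(* product in A_theta^alg, from U2 U1 = lambda U1 U2:
   (c U1^a U2^b)(d U1^a' U2^b') = c d lambda^{b a'} U1^{a+a'} U2^{b+b'} *)
Definition mmul (R : realType) (theta : R) (x y : mon R) : mon R :=
  let: (c, a, b) := x in let: (d, a', b') := y in
  (c * d * lam theta (b * a')%:~R, a + a', b + b').

Definition mone (R : realType) : mon R := (1, 0, 0).

Definition minv (R : realType) (theta : R) (x : mon R) : mon R :=
  let: (c, a, b) := x in (c^-1 * lam theta (a * b)%:~R, - a, - b).

Definition mpow_nat (R : realType) (theta : R) (x : mon R) (n : nat) : mon R :=
  iter n (mmul theta x) (mone R).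

Definition mpow (R : realType) (theta : R) (x : mon R) (z : int) : mon R :=
  match z with
  | Posz n => mpow_nat theta x n
  | Negz n => mpow_nat theta (minv theta x) n.+1
  end.

(* the automorphism determined by U1 |-> g1, U2 |-> g2, on monomials:
   U1^n U2^m |-> g1^n g2^m *)
Definition aut_mon (R : realType) (theta : R) (g1 g2 : mon R) (nm : idx) : mon R :=
  mmul theta (mpow theta g1 nm.1) (mpow theta g2 nm.2).

Definition omega (R : realType) (theta : R) : idx -> mon R :=
  aut_mon theta (1, 0, -1) (lam theta (- 2^-1), 1, -1).

Definition momega (R : realType) (theta : R) : idx -> mon R :=
  aut_mon theta (1, 0, 1) (lam theta (- 2^-1), -1, 1).

Definition mon_apply (R : realType) (h : idx -> mon R) (x : mon R) : mon R :=
  let: (c, a, b) := x in let: (d, a', b') := h (a, b) in (c * d, a', b').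

Definition aut_pow (R : realType) (h : idx -> mon R) (k : nat) (nm : idx) : mon R :=
  iter k (mon_apply h) (1, nm.1, nm.2).

(* termwise action  h . sum phi_{n,m} U1^n U2^m = sum phi_{n,m} h(U1^n U2^m);
   the coefficient at (p,q) collects all terms landing on U1^p U2^q *)
Definition act (R : realType) (h : idx -> mon R) (phi : fseries R) : fseries R :=
  fun pq => \sum_(nm \in [set nm : idx | ((h nm).1.2, (h nm).2) = pq])
              (h nm).1.1 * phi nm.

(* left multiplication of a series by a finite sum b:
   (U1^n U2^m)(U1^n' U2^m') = lambda^{m n'} U1^{n+n'} U2^{m+m'} *)
Definition mulL (R : realType) (theta : R) (b phi : fseries R) : fseries R :=
  fun pq => \sum_(nm \in [set: idx])
    b nm * phi (pq.1 - nm.1, pq.2 - nm.2) * lam theta (nm.2 * (pq.1 - nm.1))%:~R.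

Definition mulR (R : realType) (theta : R) (phi a : fseries R) : fseries R :=
  fun pq => \sum_(nm \in [set: idx])
    phi (pq.1 - nm.1, pq.2 - nm.2) * a nm * lam theta ((pq.2 - nm.2) * nm.1)%:~R.

Definition H0_omega (R : realType) (theta : R) (phi : fseries R) : Prop :=
  forall a : fseries R, finsupp a ->
    mulL theta (act (omega theta) a) phi = mulR theta phi a.

Definition H0_omega_Z6 (R : realType) (theta : R) (phi : fseries R) : Prop :=
  H0_omega theta phi /\
  forall k : nat, act (aut_pow (momega theta) k) phi = phi.

From HB Require Import structures.
From mathcomp Require Import all_boot all_order all_algebra.
From mathcomp Require Import all_classical all_reals all_analysis.
From mathcomp Require Import complex.
From mathcomp Require Import ring zify.
Set Implicit Arguments. Unset Strict Implicit. Unset Printing Implicit Defensive.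
Import Order.TTheory GRing.Theory Num.Theory.
Local Open Scope ring_scope.
Local Open Scope classical_set_scope.

(* Write phi = psi * lam q with q (n, m) = (n^2 + 4nm + m^2) / 6. Tested on
   monomials, the equations (omega . a) phi = phi a say exactly that psi is
   invariant under translation by the lattice (1 - omega) Z^2, spanned by
   (1, 1) and (-1, 2), of index 3 with cosets detected by (m - n) mod 3.  In
   the same coordinates -omega acts on psi by permuting the indices, fixing
   the coset of 0 and exchanging the two others, so the invariants are spanned
   by lam q restricted to the coset of 0 and to its complement. *)

Section NoncommutativeTorus.
Variables (R : realType) (theta : R).

Local Notation lam := (lam theta).

Lemma lamD s t : lam (s + t) = lam s * lam t.
Proof.
rewrite /lam mulrDr.
by apply/eqP; rewrite cosD sinD eq_complex /=; apply/andP; split; apply/eqP; ring.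
Qed.

Lemma lam0 : lam 0 = 1.
Proof. by rewrite /lam mulr0 cos0 sin0. Qed.

Lemma lam_neq0 s : lam s != 0.
Proof.
apply: contra_eq_neq (lamD s (- s)) => ->.
by rewrite mul0r subrr lam0 oner_neq0.
Qed.

Lemma mmul_lam s a b s' a' b' :
  mmul theta (lam s, a, b) (lam s', a', b') =
  (lam (s + s' + b%:~R * a'%:~R), a + a', b + b').
Proof. by rewrite /mmul !lamD intrM. Qed.

Lemma mpow_nat_lam s a b k :
  mpow_nat theta (lam s, a, b) k =
  (lam (s * k%:R + a%:~R * b%:~R * (k%:R * (k%:R - 1) / 2)), a * k%:Z, b * k%:Z).
Proof.
elim: k => [|k IH]; first by rewrite /mpow_nat /= /mone !(mulr0, mul0r, addr0) lam0.
rewrite /mpow_nat iterS -/(mpow_nat _ _ _) IH mmul_lam.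
congr (_, _, _); rewrite -addn1 ?PoszD; [congr lam | ring | ring].
by rewrite intrM -!pmulrn natrD; field.
Qed.

Lemma mpow_lam s a b z :
  mpow theta (lam s, a, b) z =
  (lam (s * z%:~R + a%:~R * b%:~R * (z%:~R * (z%:~R - 1) / 2)), a * z, b * z).
Proof.
case: z => n; first by rewrite /mpow mpow_nat_lam -pmulrn.
have lamV : (lam s)^-1 = lam (- s).
  by apply: (mulfI (lam_neq0 s)); rewrite divff ?lam_neq0 // -lamD subrr lam0.
rewrite /mpow /minv lamV -lamD mpow_nat_lam NegzE.
congr (_, _, _); [congr lam | ring | ring].
by rewrite !intrM !intrN -!pmulrn -addn1 natrD; field.
Qed.

Lemma aut_mon_lam s1 a1 b1 s2 a2 b2 n m :
  aut_mon theta (lam s1, a1, b1) (lam s2, a2, b2) (n, m) =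
  (lam (s1 * n%:~R + a1%:~R * b1%:~R * (n%:~R * (n%:~R - 1) / 2)
        + (s2 * m%:~R + a2%:~R * b2%:~R * (m%:~R * (m%:~R - 1) / 2))
        + (b1 * n)%:~R * (a2 * m)%:~R),
   a1 * n + a2 * m, b1 * n + b2 * m).
Proof. by rewrite /aut_mon !mpow_lam mmul_lam. Qed.

Definition omega_phase (x : idx) : R := - x.2%:~R ^+ 2 / 2 - x.1%:~R * x.2%:~R.
Definition omega_idx (x : idx) : idx := (x.2, - x.1 - x.2).
Definition omega_idx_inv (x : idx) : idx := (- x.1 - x.2, x.1).
Definition momega_idx (x : idx) : idx := (- x.2, x.1 + x.2).
Definition momega_idx_inv (x : idx) : idx := (x.1 + x.2, - x.1).

Lemma omega_idxK : cancel omega_idx omega_idx_inv.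
Proof. by case=> n m; congr pair; rewrite /=; ring. Qed.

Lemma omega_idx_invK : cancel omega_idx_inv omega_idx.
Proof. by case=> n m; congr pair; rewrite /=; ring. Qed.

Lemma momega_idxK : cancel momega_idx momega_idx_inv.
Proof. by case=> n m; congr pair; rewrite /=; ring. Qed.

Lemma momega_idx_invK : cancel momega_idx_inv momega_idx.
Proof. by case=> n m; congr pair; rewrite /=; ring. Qed.

Lemma omegaE x : omega theta x = (lam (omega_phase x), (omega_idx x).1, (omega_idx x).2).
Proof.
case: x => n m; rewrite /omega -lam0 aut_mon_lam.
rewrite /omega_idx /omega_phase /=; congr (_, _, _); [congr lam | ring | ring].
by rewrite ?(intrD, intrN, intrM); field.
Qed.

Lemma momegaE x : momega theta x = (lam (omega_phase x), (momega_idx x).1, (momega_idx x).2).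
Proof.
case: x => n m; rewrite /momega -lam0 aut_mon_lam.
rewrite /momega_idx /omega_phase /=; congr (_, _, _); [congr lam | ring | ring].
by rewrite ?(intrD, intrN, intrM); field.
Qed.

Definition mon_idx (x : mon R) : idx := (x.1.2, x.2).

Section BijectiveAction.
Variables (h : idx -> mon R) (f g : idx -> idx).
Hypotheses (fK : cancel f g) (gK : cancel g f) (h_idx : forall nm, mon_idx (h nm) = f nm).

Lemma actE phi pq : act h phi pq = (h (g pq)).1.1 * phi (g pq).
Proof.
rewrite /act (_ : [set nm | _] = [set g pq]) ?fsbig_set1 //.
apply/seteqP; split=> nm /=; last by move->; rewrite -[X in _ = X]gK; exact: h_idx.
by move/(congr1 g); rewrite [X in g X = _ -> _]/= -/(mon_idx _) h_idx fK.
Qed.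

Lemma act_fixedP phi : act h phi = phi <-> forall y, phi (f y) = (h y).1.1 * phi y.
Proof.
split=> [fixed y | H]; first by rewrite -{1}fixed actE fK.
by apply/funext => pq; rewrite actE -H gK.
Qed.

End BijectiveAction.

Lemma iter_can (T : Type) (f g : T -> T) : cancel f g -> forall k, cancel (iter k f) (iter k g).
Proof. by move=> fK; elim=> [|k IH] x //; rewrite iterSr iterS fK IH. Qed.

Section AutomorphismPowers.
Variables (h : idx -> mon R) (f : idx -> idx).
Hypothesis h_idx : forall nm, mon_idx (h nm) = f nm.

Lemma aut_pow_idx k nm : mon_idx (aut_pow h k nm) = iter k f nm.
Proof.
elim: k => [|k IH]; first by case: nm.
rewrite /aut_pow iterS -/(aut_pow h k nm) /= -IH.
case: (aut_pow h k nm) => [[c a] b] /=; rewrite -[f _]h_idx /mon_idx.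
by case: (h (a, b)) => [[d a'] b'].
Qed.

Lemma aut_pow_coef phi : (forall y, phi (f y) = (h y).1.1 * phi y) ->
  forall k nm, phi (iter k f nm) = (aut_pow h k nm).1.1 * phi nm.
Proof.
move=> H; elim=> [|k IH] nm; first by rewrite mul1r.
rewrite iterS -aut_pow_idx /aut_pow iterS -/(aut_pow h k nm).
move: (IH nm); rewrite -aut_pow_idx; case: (aut_pow h k nm) => [[c a] b].
rewrite /mon_idx /= H => ->.
by case: (h (a, b)) => [[d a'] b'] /=; rewrite mulrA [c * d]mulrC.
Qed.

End AutomorphismPowers.

Lemma aut_pow_fixedP (h : idx -> mon R) (f g : idx -> idx) phi :
  cancel f g -> cancel g f -> (forall nm, mon_idx (h nm) = f nm) ->
  (forall k, act (aut_pow h k) phi = phi) <-> forall y, phi (f y) = (h y).1.1 * phi y.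
Proof.
move=> fK gK h_idx; split=> [/(_ 1%N) | H k].
  move/(act_fixedP fK gK (aut_pow_idx h_idx 1)) => H y; rewrite H /aut_pow /=.
  by case: y => a b; case: (h (a, b)) => [[d a'] b'] /=; rewrite mul1r.
apply/(act_fixedP (iter_can fK k) (iter_can gK k) (aut_pow_idx h_idx k)).
exact: aut_pow_coef.
Qed.

Lemma omega_idxE x : mon_idx (omega theta x) = omega_idx x.
Proof. by rewrite omegaE; case: (omega_idx x). Qed.

Lemma momega_idxE x : mon_idx (momega theta x) = momega_idx x.
Proof. by rewrite momegaE; case: (momega_idx x). Qed.

Definition omega_mulL_coef (phi : fseries R) (i pq : idx) : complex R :=
  lam (omega_phase i) * phi (pq.1 - (omega_idx i).1, pq.2 - (omega_idx i).2)
  * lam ((omega_idx i).2 * (pq.1 - (omega_idx i).1))%:~R.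

Definition mulR_coef (phi : fseries R) (i pq : idx) : complex R :=
  phi (pq.1 - i.1, pq.2 - i.2) * lam ((pq.2 - i.2) * i.1)%:~R.

Lemma mulL_act_omega a phi pq :
  mulL theta (act (omega theta) a) phi pq =
  \sum_(i \in [set: idx]) a i * omega_mulL_coef phi i pq.
Proof.
rewrite /mulL (reindex_fsbigT omega_idx); last first.
  by exists omega_idx_inv; [exact: omega_idxK | exact: omega_idx_invK].
apply: eq_fsbigr => i _.
rewrite (actE omega_idxK omega_idx_invK omega_idxE) omega_idxK omegaE /omega_mulL_coef /=.
ring.
Qed.

Lemma mulRE a phi pq : mulR theta phi a pq = \sum_(i \in [set: idx]) a i * mulR_coef phi i pq.
Proof. by apply: eq_fsbigr => i _; rewrite /mulR_coef; ring. Qed.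

Definition delta (i : idx) : fseries R := fun nm => (nm == i)%:R.

Lemma finsupp_delta i : finsupp (delta i).
Proof.
rewrite /finsupp (_ : [set nm | _] = [set i]); first exact: finite_set1.
by apply/seteqP; split=> nm /=; rewrite /delta pnatr_eq0 eqb0 negbK; [move/eqP | move->].
Qed.

Lemma fsbig_delta (F : idx -> complex R) i :
  \sum_(x \in [set: idx]) delta i x * F x = F i.
Proof.
rewrite -(fsbig_widen [set i]) ?fsbig_set1 /delta ?eqxx ?mul1r //.
by move=> x [_ /= /eqP /negbTE ->]; rewrite mul0r.
Qed.

Lemma H0_omega_coefP phi :
  H0_omega theta phi <-> forall i pq, omega_mulL_coef phi i pq = mulR_coef phi i pq.
Proof.
split=> [H i pq | H a _].
  by have := congr1 (@^~ pq) (H _ (finsupp_delta i)); rewrite mulL_act_omega mulRE !fsbig_delta.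
by apply/funext => pq; rewrite mulL_act_omega mulRE; apply: eq_fsbigr => i _; rewrite H.
Qed.

Definition qform (x : idx) : R := (x.1%:~R ^+ 2 + 4 * x.1%:~R * x.2%:~R + x.2%:~R ^+ 2) / 6.

Definition untwist (phi : fseries R) : fseries R := fun x => phi x * lam (- qform x).

Lemma untwistK phi x : phi x = untwist phi x * lam (qform x).
Proof. by rewrite /untwist -mulrA -lamD addNr lam0 mulr1. Qed.

Definition omega_lattice (i : idx) : idx := (i.1 - i.2, i.1 + 2 * i.2).

Lemma omega_mulL_coef_untwist phi i y :
  omega_mulL_coef phi i (y + i) =
  untwist phi (y + omega_lattice i) * lam (qform y + (y.2 * i.1)%:~R).
Proof.
rewrite /omega_mulL_coef.
have -> : ((y + i).1 - (omega_idx i).1, (y + i).2 - (omega_idx i).2) = y + omega_lattice i.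
  by apply: injective_projections; rewrite /=; ring.
rewrite untwistK mulrCA -mulrA -!lamD; congr (_ * lam _).
by rewrite /omega_phase /qform /= !(intrD, intrN, intrM, intrB); field.
Qed.

Lemma mulR_coef_untwist phi i y :
  mulR_coef phi i (y + i) = untwist phi y * lam (qform y + (y.2 * i.1)%:~R).
Proof.
rewrite /mulR_coef.
have -> : ((y + i).1 - i.1, (y + i).2 - i.2) = y by apply: injective_projections; rewrite /=; ring.
by rewrite untwistK -mulrA -lamD /= !addrK.
Qed.

Lemma H0_omega_untwistP phi :
  H0_omega theta phi <-> forall i y, untwist phi (y + omega_lattice i) = untwist phi y.
Proof.
rewrite H0_omega_coefP; split=> H i y.
  have := H i (y + i); rewrite omega_mulL_coef_untwist mulR_coef_untwist.
  by move/(mulIf (lam_neq0 _)).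
by rewrite -(subrK i y) omega_mulL_coef_untwist mulR_coef_untwist H.
Qed.

Definition omega_coset (x : idx) : int := ((x.2 - x.1) %% 3)%Z.

Lemma omega_coset_shift i y : omega_coset (y + omega_lattice i) = omega_coset y.
Proof.
rewrite /omega_coset /= (_ : _ - _ = i.2 * 3 + (y.2 - y.1)) ?modzMDl //.
ring.
Qed.

Lemma omega_coset_momega_eq0 x : (omega_coset (momega_idx x) == 0) = (omega_coset x == 0).
Proof. by rewrite /omega_coset /=; apply/eqP/eqP => H; lia. Qed.

Lemma lattice_invariant_coset (T : Type) (f : idx -> T) :
  (forall i y, f (y + omega_lattice i) = f y) -> forall x, f x = f (0, omega_coset x).
Proof.
move=> f_inv x; set b := ((x.2 - x.1) %/ 3)%Z.
rewrite -[RHS](f_inv (x.1 + b, b)); congr f.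
have := divz_eq (x.2 - x.1) 3; rewrite -/b /omega_coset => Ex.
by apply: injective_projections; rewrite /=; lia.
Qed.

Lemma lattice_momega_invariant_classify (T : Type) (f : idx -> T) :
  (forall i y, f (y + omega_lattice i) = f y) -> (forall y, f (momega_idx y) = f y) ->
  forall x, f x = if omega_coset x == 0 then f (0, 0) else f (0, 1).
Proof.
move=> f_lat f_mom x; rewrite (lattice_invariant_coset f_lat x).
have f02 : f (0, 2) = f (0, 1).
  by rewrite -(f_mom (0, 1)) (lattice_invariant_coset f_lat (momega_idx (0, 1))).
have : 0 <= omega_coset x < 3 by rewrite modz_ge0 ?ltz_mod.
move: (omega_coset x) => r r_range.
by have [->|[->|->]] : r = 0 \/ r = 1 \/ r = 2 by lia.
Qed.

Lemma qform_momega y : qform (momega_idx y) = omega_phase y + qform y.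
Proof. by rewrite /qform /omega_phase /= !(intrD, intrN); field. Qed.

Lemma momega_coef_untwistP phi y :
  phi (momega_idx y) = (momega theta y).1.1 * phi y <->
  untwist phi (momega_idx y) = untwist phi y.
Proof.
rewrite [phi (momega_idx y)]untwistK [phi y]untwistK momegaE qform_momega lamD /=.
rewrite [RHS]mulrCA -lamD.
by split=> [/(mulIf (lam_neq0 _)) | ->].
Qed.

Lemma Z6_fixed_untwistP phi :
  (forall k, act (aut_pow (momega theta) k) phi = phi) <->
  forall y, untwist phi (momega_idx y) = untwist phi y.
Proof.
rewrite (aut_pow_fixedP _ momega_idxK momega_idx_invK momega_idxE).
by split=> H y; apply/momega_coef_untwistP.
Qed.

Lemma H0_omega_Z6_untwistP phi :
  H0_omega_Z6 theta phi <->
  (forall i y, untwist phi (y + omega_lattice i) = untwist phi y) /\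
  (forall y, untwist phi (momega_idx y) = untwist phi y).
Proof.
split=> [[/H0_omega_untwistP ? /Z6_fixed_untwistP ?] | [? ?]] //.
by split; [apply/H0_omega_untwistP | apply/Z6_fixed_untwistP].
Qed.

Definition basis (b : bool) : fseries R :=
  fun x => if (omega_coset x == 0) == b then lam (qform x) else 0.

Lemma untwist_basis b x : untwist (basis b) x = ((omega_coset x == 0) == b)%:R.
Proof. by rewrite /untwist /basis; case: ifP; rewrite ?mul0r // -lamD subrr lam0. Qed.

Lemma basis_H0_omega_Z6 b : H0_omega_Z6 theta (basis b).
Proof.
apply/H0_omega_Z6_untwistP; split=> [i y | y]; rewrite !untwist_basis.
  by rewrite omega_coset_shift.
by rewrite omega_coset_momega_eq0.
Qed.

End NoncommutativeTorus.

Theorem mainTheorem10 (R : realType) (theta : R) (htheta : irrational theta) :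
  exists phi1 phi2 : fseries R,
    [/\ H0_omega_Z6 theta phi1, H0_omega_Z6 theta phi2,
        (forall phi : fseries R, H0_omega_Z6 theta phi ->
           exists c1 c2 : complex R, phi = (fun nm => c1 * phi1 nm + c2 * phi2 nm)) &
        (forall c1 c2 : complex R, (fun nm => c1 * phi1 nm + c2 * phi2 nm) = (fun _ => 0) ->
           c1 = 0 /\ c2 = 0)].
Proof.
exists (basis theta true), (basis theta false); split.
- exact: basis_H0_omega_Z6.
- exact: basis_H0_omega_Z6.
- move=> phi /H0_omega_Z6_untwistP [lat_inv momega_inv].
  exists (untwist theta phi (0, 0)), (untwist theta phi (0, 1)); apply/funext => x.
  rewrite (untwistK theta phi x) (lattice_momega_invariant_classify lat_inv momega_inv x) /basis.
  by case: (omega_coset x == 0) => /=; rewrite ?(mulr0, addr0, add0r) mulrC.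
- move=> c1 c2 Hc.
  have := congr1 (@^~ (0, 0)) Hc; have := congr1 (@^~ (0, 1)) Hc.
  rewrite /basis /= !mulr0 addr0 add0r => /eqP + /eqP.
  by rewrite !mulf_eq0 !(negbTE (lam_neq0 _ _)) !orbF => /eqP -> /eqP ->.
Qed.
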